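(* Let $\theta=(\gamma,\mu,\sigma)\in\mathbb{R}\times\mathbb{R}\times(0,\infty)$ and $x\in\mathbb{R}$ with $1+\gamma z>0$, where $z=(x-\mu)/\sigma$, and let $u=u_\gamma(z)$. Then \[|\partial_\mu\ell_\theta(x)|\le\begin{cases}\sigma^{-1}(1+|\gamma|)\,u^{1+\gamma}&\text{if }z\le0,\\ \sigma^{-1}(1+|\gamma|)\,u^{\gamma}&\text{if }z\ge0.\end{cases}\]
   Context: $u_\gamma(z)=(1+\gamma z)^{-1/\gamma}$ for $\gamma\ne0$ and $e^{-z}$ for $\gamma=0$. $\ell_\theta(x)=\log p_\theta(x)=-\log\sigma-u+(\gamma+1)\log u$ is the GEV log-density on $\{1+\gamma z>0\}$ (the GEV density being $p_\theta(x)=\sigma^{-1}e^{-u}u^{\gamma+1}\mathbf 1(1+\gamma z>0)$); its partial derivative in $\mu$ is $\partial_\mu\ell_\theta(x)=\frac{\gamma+1-u}{\sigma(1+\gamma z)}$. *)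

From Stdlib Require Import Reals.
From Coquelicot Require Import Coquelicot.
Open Scope R_scope.

Definition u_gev (g z : R) : R :=
  if Req_EM_T g 0 then exp (- z) else Rpower (1 + g * z) (- / g).

Definition z_gev (mu sigma x : R) : R := (x - mu) / sigma.

Definition ell_gev (g mu sigma x : R) : R :=
  let u := u_gev g (z_gev mu sigma x) in
  - ln sigma - u + (g + 1) * ln u.

(** The derivative is [(1 + g - u) / (sigma (1 + g z))] and [u ^ g = 1 / (1 + g z)],
    so the claim reduces to bounding [|1 + g - u|]: by [(1 + |g|) u] when [u >= 1]
    and by [1 + |g|] when [u <= 1]. Finally [u >= 1] exactly when [z <= 0], since
    [z * ln u <= 0]: for [g <> 0], [ln u = - ln (1 + g z) / g] and [ln (1 + t)]
    has the sign of [t]. *)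

From Stdlib Require Import Reals Lra.
From Coquelicot Require Import Coquelicot.
Open Scope R_scope.

Lemma one_le_of_ln_nonneg (u : R) : 0 < u -> 0 <= ln u -> 1 <= u.
Proof.
  intros Hu Hln; apply Rnot_lt_le; intro Hlt.
  pose proof (ln_increasing u 1 Hu Hlt); rewrite ln_1 in *; lra.
Qed.

Lemma le_one_of_ln_nonpos (u : R) : 0 < u -> ln u <= 0 -> u <= 1.
Proof.
  intros Hu Hln; apply Rnot_lt_le; intro Hlt.
  pose proof (ln_increasing 1 u Rlt_0_1 Hlt); rewrite ln_1 in *; lra.
Qed.

Lemma mul_ln_1p_nonneg (t : R) : 0 < 1 + t -> 0 <= t * ln (1 + t).
Proof.
  intros Ht; destruct (Rle_or_lt 0 t) as [Hpos | Hneg].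
  - assert (0 <= ln (1 + t)) by (rewrite <- ln_1; apply ln_le; lra). nra.
  - assert (ln (1 + t) <= 0) by (rewrite <- ln_1; apply ln_le; lra). nra.
Qed.

Lemma u_gev_pos (g z : R) : 0 < u_gev g z.
Proof. unfold u_gev, Rpower; destruct (Req_EM_T g 0); apply exp_pos. Qed.

Lemma u_gev_0 (g : R) : u_gev g 0 = 1.
Proof.
  unfold u_gev, Rpower; destruct (Req_EM_T g 0).
  - now rewrite Ropp_0, exp_0.
  - now rewrite Rmult_0_r, Rplus_0_r, ln_1, Rmult_0_r, exp_0.
Qed.

Lemma Rpower_u_gev (g z : R) :
  0 < 1 + g * z -> Rpower (u_gev g z) g = / (1 + g * z).
Proof.
  intros Hw; unfold u_gev; destruct (Req_EM_T g 0) as [-> | Hg].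
  - rewrite Rmult_0_l, Rplus_0_r, Rinv_1; apply Rpower_O, exp_pos.
  - rewrite Rpower_mult.
    replace (- / g * g) with (Ropp 1) by (field; exact Hg).
    rewrite Rpower_Ropp, Rpower_1 by exact Hw; reflexivity.
Qed.

Lemma z_mul_ln_u_gev_nonpos (g z : R) :
  0 < 1 + g * z -> z * ln (u_gev g z) <= 0.
Proof.
  intros Hw; unfold u_gev; destruct (Req_EM_T g 0) as [-> | Hg].
  - rewrite ln_exp; nra.
  - rewrite ln_Rpower.
    pose proof (mul_ln_1p_nonneg (g * z) Hw) as Hsign.
    replace (z * (- / g * ln (1 + g * z)))
      with (- (g * z * ln (1 + g * z)) * (/ g * / g)) by (field; exact Hg).
    assert (0 <= / g * / g) by nra. nra.
Qed.

Lemma u_gev_ge1 (g z : R) : 0 < 1 + g * z -> z <= 0 -> 1 <= u_gev g z.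
Proof.
  intros Hw [Hz | ->]; [| rewrite u_gev_0; lra].
  apply one_le_of_ln_nonneg; [apply u_gev_pos |].
  pose proof (z_mul_ln_u_gev_nonpos g z Hw); nra.
Qed.

Lemma u_gev_le1 (g z : R) : 0 < 1 + g * z -> 0 <= z -> u_gev g z <= 1.
Proof.
  intros Hw [Hz | <-]; [| rewrite u_gev_0; lra].
  apply le_one_of_ln_nonpos; [apply u_gev_pos |].
  pose proof (z_mul_ln_u_gev_nonpos g z Hw); nra.
Qed.

Lemma is_derive_u_gev (g z : R) :
  0 < 1 + g * z -> is_derive (u_gev g) z (- u_gev g z / (1 + g * z)).
Proof.
  intros Hw; unfold u_gev; destruct (Req_EM_T g 0) as [-> | Hg].
  - rewrite Rmult_0_l, Rplus_0_r.
    apply is_derive_ext with (f := fun t => exp (- t)).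
    { intro t; now destruct (Req_EM_T 0 0). }
    auto_derive; [easy | field].
  - apply is_derive_ext with (f := fun t => exp (- / g * ln (1 + g * t))).
    { intro t; now destruct (Req_EM_T g 0). }
    unfold Rpower; auto_derive; [exact Hw | field; split; lra].
Qed.

Lemma is_derive_ell_gev_in_z (g sigma z : R) :
  0 < 1 + g * z ->
  is_derive (fun t => - ln sigma - u_gev g t + (g + 1) * ln (u_gev g t)) z
    ((u_gev g z - (g + 1)) / (1 + g * z)).
Proof.
  intros Hw.
  pose proof (u_gev_pos g z) as Hu.
  pose proof (is_derive_u_gev g z Hw) as Du.
  pose proof (is_derive_comp ln (u_gev g) z _ _ (is_derive_ln _ Hu) Du) as Dlnu.
  pose proof (is_derive_plus _ _ z _ _
    (is_derive_minus _ _ z _ _ (is_derive_const (- ln sigma) z) Du)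
    (is_derive_scal _ z (g + 1) _ Dlnu)) as D.
  replace ((u_gev g z - (g + 1)) / (1 + g * z))
    with (plus (minus zero (- u_gev g z / (1 + g * z)))
           ((g + 1) * scal (- u_gev g z / (1 + g * z)) (/ u_gev g z))).
  - exact D.
  - unfold minus, plus, opp, zero, scal; simpl; unfold mult; simpl.
    field; lra.
Qed.

Lemma is_derive_ell_gev_in_mu (g mu sigma x : R) :
  0 < sigma -> 0 < 1 + g * z_gev mu sigma x ->
  is_derive (fun m => ell_gev g m sigma x) mu
    ((g + 1 - u_gev g (z_gev mu sigma x)) / (sigma * (1 + g * z_gev mu sigma x))).
Proof.
  intros Hs Hw.
  assert (Dz : is_derive (fun m => z_gev m sigma x) mu (- / sigma)).
  { unfold z_gev; auto_derive; [easy | field; lra]. }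
  pose proof (is_derive_comp _ _ mu _ _ (is_derive_ell_gev_in_z g sigma _ Hw) Dz) as D.
  replace ((g + 1 - u_gev g (z_gev mu sigma x)) / (sigma * (1 + g * z_gev mu sigma x)))
    with (scal (- / sigma)
           ((u_gev g (z_gev mu sigma x) - (g + 1)) / (1 + g * z_gev mu sigma x))).
  - exact D.
  - unfold scal; simpl; unfold mult; simpl. field; lra.
Qed.

Lemma Rabs_add1_sub_le_of_ge1 (g u : R) :
  1 <= u -> Rabs (g + 1 - u) <= (1 + Rabs g) * u.
Proof.
  intros Hu; pose proof (Rle_abs g); pose proof (Rabs_pos g).
  pose proof (Rabs_maj2 g). apply Rabs_le; split; nra.
Qed.

Lemma Rabs_add1_sub_le_of_le1 (g u : R) :
  0 < u <= 1 -> Rabs (g + 1 - u) <= 1 + Rabs g.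
Proof.
  intros Hu; pose proof (Rle_abs g); pose proof (Rabs_maj2 g).
  apply Rabs_le; split; lra.
Qed.

Theorem lemmaB2 (g mu sigma x : R) :
  0 < sigma ->
  0 < 1 + g * z_gev mu sigma x ->
  let z := z_gev mu sigma x in
  let u := u_gev g z in
  let dmu := Derive (fun m => ell_gev g m sigma x) mu in
  (z <= 0 -> Rabs dmu <= / sigma * (1 + Rabs g) * Rpower u (1 + g)) /\
  (0 <= z -> Rabs dmu <= / sigma * (1 + Rabs g) * Rpower u g).
Proof.
  intros Hs Hw z u dmu; fold z in Hw.
  pose proof (u_gev_pos g z) as Hu; fold u in Hu.
  assert (Hpow : Rpower u g = / (1 + g * z)) by exact (Rpower_u_gev g z Hw).
  assert (Hscale : 0 < / sigma * / (1 + g * z)).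
  { apply Rmult_lt_0_compat; apply Rinv_0_lt_compat; lra. }
  assert (Hdmu : Rabs dmu = Rabs (g + 1 - u) * (/ sigma * / (1 + g * z))).
  { assert (Hd : dmu = (g + 1 - u) / (sigma * (1 + g * z))).
    { apply is_derive_unique, is_derive_ell_gev_in_mu; assumption. }
    rewrite Hd; unfold Rdiv; rewrite Rabs_mult, Rinv_mult, (Rabs_pos_eq (/ sigma * _)); lra. }
  rewrite Rpower_plus, Rpower_1, Hpow, Hdmu by exact Hu.
  split; intros Hz.
  - pose proof (Rabs_add1_sub_le_of_ge1 g u (u_gev_ge1 g z Hw Hz)); nra.
  - pose proof (Rabs_add1_sub_le_of_le1 g u (conj Hu (u_gev_le1 g z Hw Hz))); nra.
Qed.
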